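(* For $M,N\in\Lambda$, if $M=_{\mathsf v}N$ then $\mathrm{BT}(M)=\mathrm{BT}(N)$.
   Context: Call-by-value $\lambda$-calculus with permutations: $\lambda$-terms and values are $M,N::=V\mid MN$, $V::=x\mid\lambda x.M$, up to $\alpha$-conversion. Rules: $(\beta_v)$ $(\lambda x.M)V\to M\{x:=V\}$ if $V$ is a value; $(\sigma_1)$ $(\lambda x.M)NP\to(\lambda x.MP)N$ if $x\notin\mathrm{FV}(P)$; $(\sigma_3)$ $V((\lambda x.M)N)\to(\lambda x.VM)N$ if $V$ is a value and $x\notin\mathrm{FV}(V)$. $\to_{\mathsf v}$ is their contextual closure, $\twoheadrightarrow_{\mathsf v}$ its reflexive-transitive closure, $=_{\mathsf v}$ its reflexive-symmetric-transitive closure. $\Lambda_\bot$ is the set of $\lambda$-terms possibly containing a constant $\bot$; $\sqsubseteq$ is the smallest context-closed preorder on $\Lambda_\bot$ with $\bot\sqsubseteq x$, $\bot\sqsubseteq\lambda x.M$. Approximants $\mathcal A$ ($k\ge0$): $A::=B\mid C$; $B::=x\mid\lambda x.A\mid\bot\mid xBA_1\cdots A_k$; $C::=(\lambda x.A)(yBA_1\cdots A_k)$. $\mathcal A(M)=\{A\in\mathcal A\mid\exists N\in\Lambda,\ M\twoheadrightarrow_{\mathsf v}N,\ A\sqsubseteq N\}$; the Böhm tree is $\mathrm{BT}(M)=\bigsqcup\mathcal A(M)$ (taken to be $\emptyset$ when $\mathcal A(M)=\emptyset$), so that $\mathrm{BT}(M)=\mathrm{BT}(N)$ iff $\mathcal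 A(M)=\mathcal A(N)$. *)

(* Call-by-value lambda-calculus with permutations,
   terms in de Bruijn notation (so terms are identified up to alpha). *)
From Stdlib Require Import Arith Relations.

Inductive term : Type :=
| Var : nat -> term
| Lam : term -> term
| App : term -> term -> term
| Bot : term.

(* Lambda: terms without the constant Bot *)
Fixpoint nobot (t : term) : Prop :=
  match t with
  | Var _ => True
  | Lam t => nobot t
  | App t u => nobot t /\ nobot u
  | Bot => False
  end.

Inductive is_value : term -> Prop :=
| val_var : forall n, is_value (Var n)
| val_lam : forall t, is_value (Lam t).

Fixpoint lift (k c : nat) (t : term) : term :=
  match t with
  | Var n => if n <? c then Var n else Var (n + k)
  | Lam t => Lam (lift k (S c) t)
  | App t u => App (lift k c t) (lift k c u)
  | Bot => Bot
  end.

Fixpoint subst (j : nat) (s : term) (t : term) : term :=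
  match t with
  | Var n => if n =? j then lift j 0 s
             else if j <? n then Var (n - 1) else Var n
  | Lam t => Lam (subst (S j) s t)
  | App t u => App (subst j s t) (subst j s u)
  | Bot => Bot
  end.

Inductive vstep_root : term -> term -> Prop :=
| r_betav : forall M V, is_value V ->
    vstep_root (App (Lam M) V) (subst 0 V M)
  (* (\x.M) N P -> (\x. M P) N   with x not free in P *)
| r_sigma1 : forall M N P,
    vstep_root (App (App (Lam M) N) P) (App (Lam (App M (lift 1 0 P))) N)
  (* V ((\x.M) N) -> (\x. V M) N   with x not free in V *)
| r_sigma3 : forall V M N, is_value V ->
    vstep_root (App V (App (Lam M) N)) (App (Lam (App (lift 1 0 V) M)) N).

Inductive vstep : term -> term -> Prop :=
| vs_root : forall t u, vstep_root t u -> vstep t u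
| vs_lam : forall t u, vstep t u -> vstep (Lam t) (Lam u)
| vs_appl : forall t u s, vstep t u -> vstep (App t s) (App u s)
| vs_appr : forall t u s, vstep t u -> vstep (App s t) (App s u).

Definition vred : term -> term -> Prop := clos_refl_trans term vstep.
Definition veq : term -> term -> Prop := clos_refl_sym_trans term vstep.

Inductive approx_le : term -> term -> Prop :=
| al_refl : forall t, approx_le t t
| al_trans : forall t u v, approx_le t u -> approx_le u v -> approx_le t v
| al_bot_var : forall n, approx_le Bot (Var n)
| al_bot_lam : forall t, approx_le Bot (Lam t)
| al_lam : forall t u, approx_le t u -> approx_le (Lam t) (Lam u)
| al_appl : forall t u s, approx_le t u -> approx_le (App t s) (App u s)
| al_appr : forall t u s, approx_le t u -> approx_le (App s t) (App s u).

(* Approximants: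
   A ::= B | C ;  B ::= x | \x.A | Bot | x B A1..Ak ;  C ::= (\x.A)(y B A1..Ak).
   is_head t  <->  t = x B A1 .. Ak  (k >= 0). *)
Inductive is_A : term -> Prop :=
| A_B : forall t, is_B t -> is_A t
| A_C : forall a h, is_A a -> is_head h -> is_A (App (Lam a) h)
with is_B : term -> Prop :=
| B_var : forall n, is_B (Var n)
| B_lam : forall a, is_A a -> is_B (Lam a)
| B_bot : is_B Bot
| B_head : forall h, is_head h -> is_B h
with is_head : term -> Prop :=
| H_base : forall n b, is_B b -> is_head (App (Var n) b)
| H_app : forall h a, is_head h -> is_A a -> is_head (App h a).

Definition approximants (M : term) (A : term) : Prop :=
  is_A A /\ exists N, nobot N /\ vred M N /\ approx_le A N.

(* BT(M) = sup A(M); BT(M) = BT(N) iff A(M) = A(N). We represent the Böhm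
   tree by the set of its approximants. *)
Definition BT (M : term) : term -> Prop := approximants M.

(* Reduction ->v splits into parallel beta_v-reduction, which has the diamond
   property, and sigma-reduction, which is terminating (a multiplicative weight
   decreases) and locally confluent, hence confluent by Newman's lemma.  The two
   commute, so ->v is confluent (Hindley-Rosen) and convertible terms have a
   common reduct.  It remains to see that A(M) is invariant under reduction.  An
   approximant never lies below a redex, because heads x B A1 .. Ak only lie below
   applications whose function part is not an abstraction; so if A <= N and N
   reduces to N', the contracted redex of N sits below a Bot of A and A <= N' still
   holds.  Given A <= N with M ->> N and M ->> P, a common reduct Q of N and P
   then witnesses A in A(P). *)

From Stdlib Require Import Arith Lia Relations Wf_nat.

Ltac index_cases :=
  repeat (simpl; match goal with
                 | |- context [?a <? ?b] => destruct (Nat.ltb_spec a b)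
                 | |- context [?a =? ?b] => destruct (Nat.eqb_spec a b)
                 end);
  simpl; try (f_equal; lia); try lia.

Lemma lift_0 : forall t c, lift 0 c t = t.
Proof. induction t; intros c; index_cases; f_equal; auto. Qed.

Lemma lift_lift : forall t i j c d, d <= c -> c <= d + j ->
  lift i c (lift j d t) = lift (i + j) d t.
Proof. induction t; intros i j c d H1 H2; index_cases; f_equal; auto; apply IHt; lia. Qed.

Lemma lift_lift_comm : forall t k i c d, d <= c ->
  lift k (i + c) (lift i d t) = lift i d (lift k c t).
Proof.
  induction t; intros k i c d H; index_cases; f_equal; auto.
  replace (S (i + c)) with (i + S c) by lia; apply IHt; lia.
Qed.

Lemma subst_lift : forall t v c j k, c <= j -> j <= c + k ->
  subst j v (lift (S k) c t) = lift k c t.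
Proof. induction t; intros v c j k H1 H2; index_cases; f_equal; auto; apply IHt; lia. Qed.

Lemma subst_lift_comm : forall t s i j c, c <= j ->
  subst (i + j) s (lift i c t) = lift i c (subst j s t).
Proof.
  induction t; intros s i j c H; simpl.
  - index_cases; subst; rewrite lift_lift by lia; f_equal; lia.
  - f_equal; replace (S (i + j)) with (i + S j) by lia; apply IHt; lia.
  - f_equal; auto.
  - reflexivity.
Qed.

Lemma lift_subst_comm : forall t k i c v,
  lift k (i + c) (subst i v t) = subst i (lift k c v) (lift k (S (i + c)) t).
Proof.
  induction t; intros k i c v; simpl.
  - index_cases; subst; apply lift_lift_comm; lia.
  - f_equal; replace (S (i + c)) with (S i + c) by lia; apply IHt.
  - f_equal; auto.
  - reflexivity.
Qed.

Lemma subst_subst : forall t s v i j,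
  subst (i + j) s (subst i v t) = subst i (subst j s v) (subst (S (i + j)) s t).
Proof.
  induction t; intros s v i j; simpl.
  - index_cases; subst.
    + replace (S (i + j)) with (S (0 + (i + j))) by lia.
      rewrite subst_lift by lia; reflexivity.
    + replace j with (j + 0) by lia; replace (i + (j + 0)) with (i + j) by lia.
      rewrite <- subst_lift_comm by lia; f_equal; lia.
  - f_equal; replace (S (i + j)) with (S i + j) by lia; apply IHt.
  - f_equal; auto.
  - reflexivity.
Qed.

Lemma is_value_lift v k c : is_value v -> is_value (lift k c v).
Proof. intros [n | t]; simpl; [destruct (n <? c) |]; constructor. Qed.

Lemma is_value_subst v s j : is_value v -> is_value s -> is_value (subst j s v).
Proof.
  intros [n | t] Hs; simpl; [| constructor].
  destruct (n =? j); [apply is_value_lift; assumption | destruct (j <? n); constructor].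
Qed.

Lemma not_value_app t u : ~ is_value (App t u).
Proof. inversion 1. Qed.

Lemma nobot_lift : forall t k c, nobot t -> nobot (lift k c t).
Proof.
  induction t; intros k c; simpl; auto.
  - destruct (n <? c); simpl; auto.
  - intros []; auto.
Qed.

Lemma nobot_subst : forall t s j, nobot t -> nobot s -> nobot (subst j s t).
Proof.
  induction t; intros s j; simpl; auto.
  - destruct (n =? j); [auto using nobot_lift | destruct (j <? n); simpl; auto].
  - intros [] ?; auto.
Qed.

Notation star R := (clos_refl_trans _ R).

Section AbstractRewriting.

Context {A : Type}.
Implicit Types R S : relation A.

Definition joinable R (b c : A) := exists d, R b d /\ R c d.

Definition commute R S :=
  forall a b c, R a b -> S a c -> exists d, S b d /\ R c d.

Definition confluent R := commute (star R) (star R).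

Lemma star_map {B} R (S : relation B) (f : A -> B) :
  (forall x y, R x y -> S (f x) (f y)) ->
  forall x y, star R x y -> star S (f x) (f y).
Proof. intros Hf x y H; induction H; eauto using rt_step, rt_refl, rt_trans. Qed.

Lemma star_incl R S : inclusion A R S -> inclusion A (star R) (star S).
Proof. intros H x y; apply (star_map R S (fun z => z)); assumption. Qed.

Lemma commute_sym R S : commute R S -> commute S R.
Proof. intros H a b c Hb Hc; destruct (H a c b Hc Hb) as (d & ? & ?); eauto. Qed.

Lemma commute_star_l R S :
  (forall a b c, R a b -> S a c -> exists d, S b d /\ star R c d) ->
  commute (star R) S.
Proof.
  intros H a b c Hab; revert c; induction Hab as [a b Hab | a | a x b _ IH1 _ IH2].
  - intros c; apply H; assumption.
  - intros c Hc; exists c; split; [assumption | apply rt_refl].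
  - intros c Hc.
    destruct (IH1 c Hc) as (d1 & Hxd1 & Hcd1).
    destruct (IH2 d1 Hxd1) as (d & Hbd & Hd1d).
    exists d; split; [assumption | eapply rt_trans; eassumption].
Qed.

Lemma commute_star R S :
  (forall a b c, R a b -> S a c -> exists d, S b d /\ star R c d) ->
  commute (star R) (star S).
Proof.
  intros H; apply commute_sym, commute_star_l.
  intros a b c Hb Hc.
  destruct (commute_star_l R S H a c b Hc Hb) as (d & ? & ?).
  exists d; split; [| apply rt_step]; assumption.
Qed.

Lemma diamond_confluent R : commute R R -> confluent R.
Proof.
  intros H; apply commute_star.
  intros a b c Hb Hc; destruct (H a b c Hb Hc) as (d & ? & ?).
  exists d; split; [| apply rt_step]; assumption.
Qed.

Lemma newman R (f : A -> nat) :
  (forall x y, R x y -> f y < f x) ->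
  (forall a b c, R a b -> R a c -> joinable (star R) b c) ->
  confluent R.
Proof.
  intros Hdec Hloc a.
  induction a as [a IH] using (well_founded_ind (well_founded_ltof A f)).
  intros b c Hb Hc.
  apply clos_rt_rt1n in Hb as [| b1 b' Hab1 Hb1b]; [exists c; split; auto using rt_refl |].
  apply clos_rt_rt1n in Hc as [| c1 c' Hac1 Hc1c];
    [exists b'; split; eauto using rt_refl, rt_step, rt_trans, clos_rt1n_rt |].
  apply clos_rt1n_rt in Hb1b; apply clos_rt1n_rt in Hc1c.
  destruct (Hloc a b1 c1 Hab1 Hac1) as (d1 & Hb1d1 & Hc1d1).
  destruct (IH b1 (Hdec _ _ Hab1) b' d1 Hb1b Hb1d1) as (e & Hbe & Hd1e).
  destruct (IH c1 (Hdec _ _ Hac1) c' e Hc1c (rt_trans _ _ _ _ _ Hc1d1 Hd1e))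
    as (g & Hcg & Heg).
  exists g; split; [eapply rt_trans; eassumption | assumption].
Qed.

Lemma confluent_incl R T :
  inclusion A R T -> inclusion A T (star R) -> confluent T -> confluent R.
Proof.
  intros HRT HTR HT a b c Hb Hc.
  assert (Hstar : inclusion A (star T) (star R)).
  { intros x y H; apply clos_rt_idempotent; revert H; apply star_incl, HTR. }
  destruct (HT a b c (star_incl _ _ HRT _ _ Hb) (star_incl _ _ HRT _ _ Hc))
    as (d & ? & ?).
  exists d; split; apply Hstar; assumption.
Qed.

Lemma hindley_rosen R S :
  confluent R -> confluent S -> commute (star R) (star S) ->
  confluent (union A R S).
Proof.
  intros HR HS HRS.
  apply (confluent_incl _ (union A (star R) (star S))).
  - intros x y [H | H]; [left | right]; apply rt_step; assumption.
  - intros x y [H | H]; revert H; apply star_incl; intros u v ?; [left | right]; assumption.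
  - apply diamond_confluent.
    intros a b c [Hb | Hb] [Hc | Hc].
    + destruct (HR a b c Hb Hc) as (d & ? & ?); exists d; split; left; assumption.
    + destruct (HRS a b c Hb Hc) as (d & ? & ?); exists d; split; [right | left]; assumption.
    + destruct (HRS a c b Hc Hb) as (d & ? & ?); exists d; split; [left | right]; assumption.
    + destruct (HS a b c Hb Hc) as (d & ? & ?); exists d; split; right; assumption.
Qed.

Lemma church_rosser R a b :
  confluent R -> clos_refl_sym_trans A R a b -> joinable (star R) a b.
Proof.
  intros HR H; induction H as [a b H | a | a b _ [d []] | a x b _ [d1 [H1 H2]] _ [d2 [H3 H4]]].
  - exists b; split; [apply rt_step; assumption | apply rt_refl].
  - exists a; split; apply rt_refl.
  - exists d; split; assumption.
  - destruct (HR x d1 d2 H2 H3) as (d & ? & ?).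
    exists d; split; eapply rt_trans; eassumption.
Qed.

End AbstractRewriting.

Inductive pbeta : term -> term -> Prop :=
| pb_var n : pbeta (Var n) (Var n)
| pb_bot : pbeta Bot Bot
| pb_lam t t' : pbeta t t' -> pbeta (Lam t) (Lam t')
| pb_app t t' u u' : pbeta t t' -> pbeta u u' -> pbeta (App t u) (App t' u')
| pb_beta m m' v v' : is_value v -> pbeta m m' -> pbeta v v' ->
    pbeta (App (Lam m) v) (subst 0 v' m').

Lemma pbeta_refl t : pbeta t t.
Proof. induction t; constructor; assumption. Qed.

Lemma is_value_pbeta v v' : is_value v -> pbeta v v' -> is_value v'.
Proof. intros [] H; inversion H; constructor. Qed.

Lemma pbeta_lam_inv m x : pbeta (Lam m) x -> exists m', x = Lam m' /\ pbeta m m'.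
Proof. inversion 1; eauto. Qed.

Lemma pbeta_lift : forall t t', pbeta t t' -> forall k c, pbeta (lift k c t) (lift k c t').
Proof.
  induction 1; intros k c; simpl; try (constructor; auto; fail).
  - destruct (n <? c); constructor.
  - replace c with (0 + c) by reflexivity; rewrite lift_subst_comm.
    constructor; auto using is_value_lift.
Qed.

Lemma pbeta_subst : forall t t', pbeta t t' -> forall s s' j, is_value s -> pbeta s s' ->
  pbeta (subst j s t) (subst j s' t').
Proof.
  induction 1; intros s s' j Hs Hss; simpl; try (constructor; auto; fail).
  - destruct (n =? j); [auto using pbeta_lift | destruct (j <? n); constructor].
  - replace j with (0 + j) by reflexivity; rewrite subst_subst.
    constructor; auto using is_value_subst.
Qed.

Lemma pbeta_diamond : commute pbeta pbeta.
Proof.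
  intros a b c H; revert c; induction H as
    [n | | t t' Ht IH | t t' u u' Ht IHt Hu IHu | m m' v v' Hv Hm IHm Hv' IHv];
    intros c Hc.
  - inversion Hc; eauto using pb_var.
  - inversion Hc; eauto using pb_bot.
  - destruct (pbeta_lam_inv _ _ Hc) as (c' & -> & Hc').
    destruct (IH c' Hc') as (d & ? & ?); exists (Lam d); split; constructor; assumption.
  - inversion Hc as [| | | ? t2 ? u2 Ht2 Hu2 | m ? ? v2 Hv Hm2 Hv2]; subst.
    + destruct (IHt t2 Ht2) as (d1 & ? & ?); destruct (IHu u2 Hu2) as (d2 & ? & ?).
      exists (App d1 d2); split; constructor; assumption.
    + destruct (pbeta_lam_inv _ _ Ht) as (m1 & -> & Hm1).
      destruct (IHt (Lam m')) as (d1 & Hd1 & Hd1'); [constructor; assumption |].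
      destruct (pbeta_lam_inv _ _ Hd1) as (dm & -> & Hdm).
      destruct (pbeta_lam_inv _ _ Hd1') as (dm' & [= <-] & Hdm').
      destruct (IHu v2 Hv2) as (d2 & ? & ?).
      exists (subst 0 d2 dm); split.
      * constructor; eauto using is_value_pbeta.
      * apply pbeta_subst; eauto using is_value_pbeta.
  - inversion Hc as [| | | ? t2 ? u2 Ht2 Hu2 | ? m2 ? v2 _ Hm2 Hv2]; subst.
    + destruct (pbeta_lam_inv _ _ Ht2) as (m1 & -> & Hm1).
      destruct (IHm m1 Hm1) as (d1 & ? & ?); destruct (IHv u2 Hu2) as (d2 & ? & ?).
      exists (subst 0 d2 d1); split.
      * apply pbeta_subst; eauto using is_value_pbeta.
      * constructor; eauto using is_value_pbeta.
    + destruct (IHm m2 Hm2) as (d1 & ? & ?); destruct (IHv v2 Hv2) as (d2 & ? & ?).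
      exists (subst 0 d2 d1); split; apply pbeta_subst; eauto using is_value_pbeta.
Qed.

Inductive sigma_root : term -> term -> Prop :=
| sr_1 M N P : sigma_root (App (App (Lam M) N) P) (App (Lam (App M (lift 1 0 P))) N)
| sr_3 V M N : is_value V ->
    sigma_root (App V (App (Lam M) N)) (App (Lam (App (lift 1 0 V) M)) N).

Inductive sigma : term -> term -> Prop :=
| s_root t u : sigma_root t u -> sigma t u
| s_lam t u : sigma t u -> sigma (Lam t) (Lam u)
| s_appl t u s : sigma t u -> sigma (App t s) (App u s)
| s_appr t u s : sigma t u -> sigma (App s t) (App s u).

#[local] Hint Constructors sigma sigma_root is_value : core.

Lemma sigma_lam_inv m x : sigma (Lam m) x -> exists m', x = Lam m' /\ sigma m m'.
Proof. inversion 1 as [? ? Hr | | |]; [inversion Hr | eauto]. Qed.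

Lemma sigma_app_inv t u x : sigma (App t u) x ->
  sigma_root (App t u) x \/ (exists t', x = App t' u /\ sigma t t') \/
  (exists u', x = App t u' /\ sigma u u').
Proof. inversion 1; eauto. Qed.

Lemma is_value_sigma v v' : is_value v -> sigma v v' -> is_value v'.
Proof.
  intros [n | t] H; [inversion H as [? ? Hr | | |]; inversion Hr |].
  destruct (sigma_lam_inv _ _ H) as (t' & -> & _); constructor.
Qed.

Fixpoint sigma_weight (t : term) : nat :=
  match t with
  | Var _ | Bot => 2
  | Lam t => S (sigma_weight t)
  | App t u => sigma_weight t * sigma_weight u
  end.

Lemma sigma_weight_ge2 t : 2 <= sigma_weight t.
Proof. induction t; simpl; nia. Qed.

Lemma sigma_weight_lift : forall t k c, sigma_weight (lift k c t) = sigma_weight t.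
Proof. induction t; intros k c; simpl; auto; destruct (n <? c); reflexivity. Qed.

Lemma sigma_weight_decreasing t u : sigma t u -> sigma_weight u < sigma_weight t.
Proof.
  induction 1 as [t u Hr | | t u s | t u s]; simpl.
  - destruct Hr as [M N P | V M N]; simpl; rewrite sigma_weight_lift.
    + pose proof (sigma_weight_ge2 N); pose proof (sigma_weight_ge2 P); nia.
    + pose proof (sigma_weight_ge2 N); pose proof (sigma_weight_ge2 V); nia.
  - lia.
  - pose proof (sigma_weight_ge2 s); nia.
  - pose proof (sigma_weight_ge2 s); nia.
Qed.

Lemma sigma_lift : forall t u, sigma t u -> forall k c, sigma (lift k c t) (lift k c u).
Proof.
  induction 1 as [t u Hr | | |]; intros k c; simpl; auto.
  destruct Hr; simpl; change (S c) with (1 + c); rewrite lift_lift_comm by lia;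
    auto using is_value_lift.
Qed.

Lemma sigma_subst : forall t u, sigma t u -> forall w j, is_value w ->
  sigma (subst j w t) (subst j w u).
Proof.
  induction 1 as [t u Hr | | |]; intros w j Hw; simpl; auto.
  destruct Hr; simpl; change (S j) with (1 + j); rewrite subst_lift_comm by lia;
    auto using is_value_subst.
Qed.

Lemma star_sigma_subst_arg : forall t s s' j, star sigma s s' ->
  star sigma (subst j s t) (subst j s' t).
Proof.
  induction t as [n | t IH | t IHt u IHu |]; intros s s' j H; simpl.
  - destruct (n =? j); [| destruct (j <? n); apply rt_refl].
    revert H; apply (star_map sigma sigma (lift j 0)); auto using sigma_lift.
  - apply (star_map sigma sigma Lam); auto.
  - apply rt_trans with (App (subst j s' t) (subst j s u)).
    + apply (star_map sigma sigma (fun x => App x _)); auto.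
    + apply (star_map sigma sigma (fun x => App _ x)); auto.
  - apply rt_refl.
Qed.

Lemma lift_1_1_lift_1_0 t : lift 1 1 (lift 1 0 t) = lift 1 0 (lift 1 0 t).
Proof. apply (lift_lift_comm t 1 1 0 0); lia. Qed.

Lemma sigma_root_local a b c : sigma_root a b -> sigma a c -> joinable (star sigma) b c.
Proof.
  intros Hr Hc; destruct Hr as [M N P | V M N HV].
  - destruct (sigma_app_inv _ _ _ Hc) as [Hr | [(t' & -> & Ht) | (P' & -> & HP)]].
    + inversion Hr as [| ? ? ? Hv]; subst; [eexists; split; apply rt_refl |].
      destruct (not_value_app _ _ Hv).
    + destruct (sigma_app_inv _ _ _ Ht) as [Hr | [(L & -> & HL) | (N' & -> & HN)]].
      * inversion Hr as [| ? M0 N0 Hv]; subst.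
        (* critical pair sigma1 / sigma3 *)
        exists (App (Lam (App (Lam (App (lift 1 1 M) (lift 1 0 (lift 1 0 P)))) M0)) N0).
        split.
        -- apply rt_step; rewrite <- lift_1_1_lift_1_0.
           exact (s_root _ _ (sr_3 (Lam (App M (lift 1 0 P))) _ _ (val_lam _))).
        -- eapply rt_trans; apply rt_step; [apply s_root, sr_1 |].
           simpl; apply s_appl, s_lam, s_root, sr_1.
      * destruct (sigma_lam_inv _ _ HL) as (M' & -> & HM).
        exists (App (Lam (App M' (lift 1 0 P))) N); split; apply rt_step; auto.
      * exists (App (Lam (App M (lift 1 0 P))) N'); split; apply rt_step; auto.
    + exists (App (Lam (App M (lift 1 0 P'))) N); split; apply rt_step; auto using sigma_lift.
  - destruct (sigma_app_inv _ _ _ Hc) as [Hr | [(V' & -> & HV') | (t' & -> & Ht)]].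
    + inversion Hr as [? ? ? | ]; subst; [destruct (not_value_app _ _ HV) |].
      eexists; split; apply rt_refl.
    + exists (App (Lam (App (lift 1 0 V') M)) N); split; apply rt_step;
        eauto using sigma_lift, is_value_sigma.
    + destruct (sigma_app_inv _ _ _ Ht) as [Hr | [(L & -> & HL) | (N' & -> & HN)]].
      * inversion Hr as [| ? M0 N0 Hv]; subst.
        (* critical pair sigma3 / sigma3 *)
        exists (App (Lam (App (Lam (App (lift 1 0 (lift 1 0 V)) (lift 1 1 M))) M0)) N0).
        split.
        -- apply rt_step; rewrite <- lift_1_1_lift_1_0.
           exact (s_root _ _ (sr_3 (Lam (App (lift 1 0 V) M)) _ _ (val_lam _))).
        -- eapply rt_trans; apply rt_step; [apply s_root, sr_3, HV |].
           simpl; apply s_appl, s_lam, s_root, sr_3, is_value_lift, HV.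
      * destruct (sigma_lam_inv _ _ HL) as (M' & -> & HM).
        exists (App (Lam (App (lift 1 0 V) M')) N); split; apply rt_step; auto.
      * exists (App (Lam (App (lift 1 0 V) M)) N'); split; apply rt_step; auto.
Qed.

Lemma sigma_locally_confluent a b c : sigma a b -> sigma a c -> joinable (star sigma) b c.
Proof.
  intros H; revert c; induction H as [a b Hr | t u H IH | t u s H IH | t u s H IH];
    intros c Hc.
  - eapply sigma_root_local; eassumption.
  - destruct (sigma_lam_inv _ _ Hc) as (c' & -> & Hc').
    destruct (IH c' Hc') as (d & ? & ?).
    exists (Lam d); split; apply (star_map sigma sigma Lam); auto.
  - destruct (sigma_app_inv _ _ _ Hc) as [Hr | [(t' & -> & Ht) | (s' & -> & Hs)]].
    + destruct (sigma_root_local _ _ _ Hr (s_appl _ _ _ H)) as (d & ? & ?); exists d; auto.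
    + destruct (IH t' Ht) as (d & ? & ?).
      exists (App d s); split; apply (star_map sigma sigma (fun x => App x s)); auto.
    + exists (App u s'); split; apply rt_step; auto.
  - destruct (sigma_app_inv _ _ _ Hc) as [Hr | [(s' & -> & Hs) | (t' & -> & Ht)]].
    + destruct (sigma_root_local _ _ _ Hr (s_appr _ _ _ H)) as (d & ? & ?); exists d; auto.
    + exists (App s' u); split; apply rt_step; auto.
    + destruct (IH t' Ht) as (d & ? & ?).
      exists (App s d); split; apply (star_map sigma sigma (fun x => App s x)); auto.
Qed.

Lemma sigma_confluent : confluent sigma.
Proof.
  apply (newman sigma sigma_weight).
  - apply sigma_weight_decreasing.
  - apply sigma_locally_confluent.
Qed.

Lemma pbeta_app_inv t u c : pbeta (App t u) c ->
  (exists t' u', c = App t' u' /\ pbeta t t' /\ pbeta u u') \/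
  (exists m m' u', t = Lam m /\ is_value u /\ pbeta m m' /\ pbeta u u' /\ c = subst 0 u' m').
Proof. inversion 1; subst; [left | right]; eauto 10. Qed.

Lemma subst_0_lift_1 t v : subst 0 v (lift 1 0 t) = t.
Proof. rewrite (subst_lift t v 0 0 0) by lia; apply lift_0. Qed.

Lemma sigma_pbeta_commute a b c :
  sigma a b -> pbeta a c -> exists d, pbeta b d /\ star sigma c d.
Proof.
  intros Hs Hp; revert b Hs; induction Hp as
    [n | | t t' Ht IH | t t' u u' Ht IHt Hu IHu | m m' v v' Hv Hm IHm Hv' IHv];
    intros b Hs.
  - inversion Hs as [? ? Hr | | |]; inversion Hr.
  - inversion Hs as [? ? Hr | | |]; inversion Hr.
  - destruct (sigma_lam_inv _ _ Hs) as (b' & -> & Hb').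
    destruct (IH b' Hb') as (d & ? & ?).
    exists (Lam d); split; [constructor | apply (star_map sigma sigma Lam)]; auto.
  - destruct (sigma_app_inv _ _ _ Hs) as [Hr | [(t2 & -> & Ht2) | (u2 & -> & Hu2)]].
    + inversion Hr as [M N P | V M N HV]; subst.
      * destruct (pbeta_app_inv _ _ _ Ht)
          as [(L' & N' & -> & HL & HN) | (? & M' & N' & [= <-] & HNv & HM & HN & ->)].
        -- destruct (pbeta_lam_inv _ _ HL) as (M' & -> & HM).
           exists (App (Lam (App M' (lift 1 0 u'))) N'); split.
           ++ repeat constructor; auto using pbeta_lift.
           ++ apply rt_step; auto.
        -- exists (App (subst 0 N' M') u'); split; [| apply rt_refl].
           replace (App (subst 0 N' M') u') with (subst 0 N' (App M' (lift 1 0 u')))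
             by (simpl; rewrite subst_0_lift_1; reflexivity).
           apply (pb_beta _ _ _ _ HNv); [constructor; auto using pbeta_lift | assumption].
      * destruct (pbeta_app_inv _ _ _ Hu)
          as [(L' & N' & -> & HL & HN) | (? & M' & N' & [= <-] & HNv & HM & HN & ->)].
        -- destruct (pbeta_lam_inv _ _ HL) as (M' & -> & HM).
           exists (App (Lam (App (lift 1 0 t') M')) N'); split.
           ++ repeat constructor; auto using pbeta_lift.
           ++ apply rt_step; eauto using is_value_pbeta.
        -- exists (App t' (subst 0 N' M')); split; [| apply rt_refl].
           replace (App t' (subst 0 N' M')) with (subst 0 N' (App (lift 1 0 t') M'))
             by (simpl; rewrite subst_0_lift_1; reflexivity).
           apply (pb_beta _ _ _ _ HNv); [constructor; auto using pbeta_lift | assumption].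
    + destruct (IHt t2 Ht2) as (d & ? & ?).
      exists (App d u'); split; [constructor | apply (star_map sigma sigma (fun x => App x u'))];
        auto.
    + destruct (IHu u2 Hu2) as (d & ? & ?).
      exists (App t' d); split; [constructor | apply (star_map sigma sigma (fun x => App t' x))];
        auto.
  - destruct (sigma_app_inv _ _ _ Hs) as [Hr | [(L & -> & HL) | (v2 & -> & Hv2)]].
    + inversion Hr as [| ? ? ? HV]; subst; destruct (not_value_app _ _ Hv).
    + destruct (sigma_lam_inv _ _ HL) as (m2 & -> & Hm2).
      destruct (IHm m2 Hm2) as (d & ? & Hm'd).
      exists (subst 0 v' d); split; [constructor; assumption |].
      revert Hm'd; apply star_map; intros x y Hxy.
      apply sigma_subst; eauto using is_value_pbeta.
    + destruct (IHv v2 Hv2) as (d & ? & ?).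
      exists (subst 0 d m'); split.
      * constructor; eauto using is_value_sigma.
      * apply star_sigma_subst_arg; assumption.
Qed.

Lemma vstep_pbeta_or_sigma : inclusion term vstep (union term pbeta sigma).
Proof.
  induction 1 as [t u [M V HV | M N P | V M N HV] | t u _ [] | t u s _ [] | t u s _ []];
    solve [left; constructor; auto using pbeta_refl | right; auto].
Qed.

Lemma pbeta_vred : inclusion term pbeta vred.
Proof.
  induction 1 as [| | t t' _ IH | t t' u u' _ IHt _ IHu | m m' v v' Hv _ IHm Hvv' IHv];
    try apply rt_refl.
  - apply (star_map vstep vstep Lam); auto using vs_lam.
  - apply rt_trans with (App t' u).
    + apply (star_map vstep vstep (fun x => App x u)); auto using vs_appl.
    + apply (star_map vstep vstep (fun x => App t' x)); auto using vs_appr.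
  - apply rt_trans with (App (Lam m') v); [| apply rt_trans with (App (Lam m') v')].
    + apply (star_map vstep vstep (fun x => App (Lam x) v)); auto using vs_appl, vs_lam.
    + apply (star_map vstep vstep (fun x => App (Lam m') x)); auto using vs_appr.
    + apply rt_step, vs_root, r_betav; eauto using is_value_pbeta.
Qed.

Lemma sigma_vstep : inclusion term sigma vstep.
Proof.
  induction 1 as [t u [] | | |]; auto using vs_lam, vs_appl, vs_appr.
  all: apply vs_root; constructor; assumption.
Qed.

Lemma vstep_confluent : confluent vstep.
Proof.
  apply (confluent_incl _ (union term pbeta sigma)).
  - apply vstep_pbeta_or_sigma.
  - intros x y [H | H]; [apply pbeta_vred | apply rt_step, sigma_vstep]; assumption.
  - apply hindley_rosen.
    + apply diamond_confluent, pbeta_diamond.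
    + apply sigma_confluent.
    + apply commute_sym, commute_star, sigma_pbeta_commute.
Qed.

Lemma nobot_vstep t u : vstep t u -> nobot t -> nobot u.
Proof.
  induction 1 as [t u [M V _ | M N P | V M N _] | | |]; simpl; try tauto.
  - intros []; apply nobot_subst; assumption.
  - pose proof (nobot_lift P 1 0); tauto.
  - pose proof (nobot_lift V 1 0); tauto.
Qed.

Lemma nobot_vred t u : vred t u -> nobot t -> nobot u.
Proof. induction 1; eauto using nobot_vstep. Qed.

(* Syntax-directed form of the approximation order: u arises from t by replacing
   some occurrences of Bot by variables or abstractions. *)
Inductive approx_le_struct : term -> term -> Prop :=
| ls_bot_bot : approx_le_struct Bot Bot
| ls_bot_var n : approx_le_struct Bot (Var n)
| ls_bot_lam t : approx_le_struct Bot (Lam t)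
| ls_var n : approx_le_struct (Var n) (Var n)
| ls_lam t u : approx_le_struct t u -> approx_le_struct (Lam t) (Lam u)
| ls_app t t' u u' : approx_le_struct t t' -> approx_le_struct u u' ->
    approx_le_struct (App t u) (App t' u').

#[local] Hint Constructors approx_le_struct : core.

Lemma approx_le_struct_refl t : approx_le_struct t t.
Proof. induction t; auto. Qed.

Lemma approx_le_struct_trans t u v :
  approx_le_struct t u -> approx_le_struct u v -> approx_le_struct t v.
Proof. intros H; revert v; induction H; intros v Hv; inversion Hv; subst; auto. Qed.

Lemma approx_le_struct_iff t u : approx_le t u <-> approx_le_struct t u.
Proof.
  split; intros H; induction H; eauto using approx_le_struct_refl, approx_le_struct_trans.
  all: eauto using approx_le.
Qed.

Lemma approx_le_struct_app_inv a t u : approx_le_struct a (App t u) ->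
  exists a1 a2, a = App a1 a2 /\ approx_le_struct a1 t /\ approx_le_struct a2 u.
Proof. inversion 1; eauto. Qed.

Lemma is_A_app_inv a1 a2 : is_A (App a1 a2) ->
  is_head (App a1 a2) \/ exists m, a1 = Lam m /\ is_A m /\ is_head a2.
Proof. inversion 1 as [? HB | ? ? ? ?]; [left; inversion HB; assumption | right; eauto]. Qed.

Lemma is_A_app_sub a1 a2 : is_A (App a1 a2) -> is_A a1 /\ is_A a2.
Proof.
  intros Ha; destruct (is_A_app_inv _ _ Ha) as [Hh | (m & -> & Hm & Hh)].
  - inversion Hh; subst; split; auto using A_B, B_var, B_head.
  - split; auto using A_B, B_lam, B_head.
Qed.

Lemma is_A_lam_inv a : is_A (Lam a) -> is_A a.
Proof. inversion 1 as [? HB |]; inversion HB as [| | | h Hh]; [assumption | inversion Hh]. Qed.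

Lemma head_not_below_value h v : is_head h -> is_value v -> ~ approx_le_struct h v.
Proof. intros [] [] Hle; inversion Hle. Qed.

Lemma head_not_below_lam_app h M N : is_head h -> ~ approx_le_struct h (App (Lam M) N).
Proof.
  intros [n b _ | h' a Hh' _] Hle; inversion Hle as [| | | | | ? ? ? ? H1 _]; subst.
  - inversion H1.
  - exact (head_not_below_value _ _ Hh' (val_lam M) H1).
Qed.

Lemma approximant_not_below_redex a t u :
  is_A a -> approx_le_struct a t -> vstep_root t u -> False.
Proof.
  intros Ha Hle Hr; destruct Hr as [M V HV | M N P | V M N HV];
    destruct (approx_le_struct_app_inv _ _ _ Hle) as (a1 & a2 & -> & H1 & H2);
    destruct (is_A_app_inv _ _ Ha) as [Hh | (m & -> & _ & Hh2)].
  - exact (head_not_below_lam_app _ _ _ Hh Hle).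
  - exact (head_not_below_value _ _ Hh2 HV H2).
  - inversion Hh as [n b _ | h a' Hh1 _]; subst; [inversion H1 |].
    exact (head_not_below_lam_app _ _ _ Hh1 H1).
  - inversion H1.
  - inversion Hh as [n b Hb | h a' Hh1 _]; subst.
    + inversion Hb as [| | | h Hh2]; subst; try solve [inversion H2].
      exact (head_not_below_lam_app _ _ _ Hh2 H2).
    + exact (head_not_below_value _ _ Hh1 HV H1).
  - exact (head_not_below_lam_app _ _ _ Hh2 H2).
Qed.

Lemma approximant_below_vstep t u a :
  vstep t u -> is_A a -> approx_le_struct a t -> approx_le_struct a u.
Proof.
  intros H; revert a; induction H as [t u Hr | t u _ IH | t u s _ IH | t u s _ IH];
    intros a Ha Hle.
  - destruct (approximant_not_below_redex _ _ _ Ha Hle Hr).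
  - inversion Hle; subst; auto using is_A_lam_inv.
  - destruct (approx_le_struct_app_inv _ _ _ Hle) as (a1 & a2 & -> & ? & ?).
    destruct (is_A_app_sub _ _ Ha); auto.
  - destruct (approx_le_struct_app_inv _ _ _ Hle) as (a1 & a2 & -> & ? & ?).
    destruct (is_A_app_sub _ _ Ha); auto.
Qed.

Lemma approximant_below_vred t u a :
  vred t u -> is_A a -> approx_le a t -> approx_le a u.
Proof.
  intros H Ha; rewrite !approx_le_struct_iff.
  induction H; eauto using approximant_below_vstep.
Qed.

Lemma BT_vred M P A : vred M P -> (BT M A <-> BT P A).
Proof.
  intros HMP; split.
  - intros (HA & N & HN & HMN & HAN).
    destruct (vstep_confluent _ _ _ HMN HMP) as (Q & HNQ & HPQ).
    split; [assumption |].
    exists Q; split; [| split]; eauto using nobot_vred, approximant_below_vred.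
  - intros (HA & N & HN & HPN & HAN).
    split; [assumption |].
    exists N; split; [| split]; [assumption | eapply rt_trans; eassumption | assumption].
Qed.

Theorem proposition2p11 : forall M N : term,
  nobot M -> nobot N -> veq M N ->
  forall A : term, BT M A <-> BT N A.
Proof.
  intros M N _ _ HMN A.
  destruct (church_rosser vstep M N vstep_confluent HMN) as (P & HMP & HNP).
  rewrite (BT_vred _ _ A HMP), (BT_vred _ _ A HNP).
  reflexivity.
Qed.
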